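(* Let $d=4c_2-\alpha c_1$, $\ell=2c_2-\alpha c_1$, $x^*=\alpha/d$, $\hat x=\alpha/\ell$, $\delta^\sharp=\frac{d^2}{8c_2\ell+d^2}$. For every $\delta\in(0,1)$ there exists $\bar x\in(x^*,\hat x]$ such that the trigger strategy profile with cooperative level $\bar x$ is a subgame perfect equilibrium of $G^\infty(\delta)$; explicitly one may take $\bar x=\hat x$ if $\delta\ge\delta^\sharp$ and $\bar x=\frac{\alpha}{d}\cdot\frac{d^2-\delta\alpha^2c_1^2+32\delta c_2^2}{d^2-\delta\alpha^2c_1^2}$ if $\delta<\delta^\sharp$.
   Context: Fix real numbers $\alpha>0$, $c_1\in[0,\tfrac{2}{\alpha}]$ and $c_2\in[\tfrac32,2]$. The stage game $G$ (Partnership Game) has two players $i=1,2$; player $i$ chooses an effort level $x_i\in[0,\alpha]$, choices being simultaneous. Player $i$'s payoff is $$u_i(x_1,x_2)=\alpha\Big(\frac{x_1+x_2}{2}+c_1\frac{x_1x_2}{2}\Big)-c_2x_i^2 .$$ The Nash equilibrium effort of $G$ is $x^*=\frac{\alpha}{4c_2-\alpha c_1}$. For $\delta\in(0,1)$, $G^\infty(\delta)$ denotes the infinitely repeated game with perfect monitoring in which $G$ is played in periods $t=1,2,\dots$, each player observes all past action profiles, and player $i$'s payoff from a play $(a^t)_{t\ge1}$ is $\sum_{t\ge1}\delta^{t-1}u_i(a^t)$. For $\bar x\in[0,\alpha]$, the trigger strategy with cooperative level $\bar x$ is the strategy which, after history $h^t=(a^1,\dots,a^{t-1})$, plays $\bar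 x$ if $t=1$ or $a^s=(\bar x,\bar x)$ for all $s<t$, and plays $x^*$ otherwise. *)

From Stdlib Require Import Reals Lra List.
Import ListNotations.
Open Scope R_scope.

Inductive player := P1 | P2.

Definition profile := (R * R)%type.

Definition u (alpha c1 c2 : R) (i : player) (a : profile) : R :=
  let (x1, x2) := a in
  alpha * ((x1 + x2) / 2 + c1 * (x1 * x2) / 2)
  - c2 * (match i with P1 => x1 | P2 => x2 end) ^ 2.

(* Histories: the list of past action profiles in chronological order
   (a^1, ..., a^{t-1}); the empty list is the initial history. *)
Definition history := list profile.

Definition strategy := history -> R.

Definition feasible_action (alpha x : R) : Prop := 0 <= x <= alpha.

Definition feasible_strategy (alpha : R) (s : strategy) : Prop :=
  forall h, feasible_action alpha (s h).

Definition feasible_history (alpha : R) (h : history) : Prop :=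
  Forall (fun a => feasible_action alpha (fst a) /\ feasible_action alpha (snd a)) h.

Fixpoint hist_after (h : history) (s1 s2 : strategy) (k : nat) : history :=
  match k with
  | O => h
  | S k' => let hk := hist_after h s1 s2 k' in hk ++ [(s1 hk, s2 hk)]
  end.

Definition outcome (h : history) (s1 s2 : strategy) (k : nat) : profile :=
  let hk := hist_after h s1 s2 k in (s1 hk, s2 hk).

Definition cont_term (alpha c1 c2 delta : R) (i : player) (h : history)
  (s1 s2 : strategy) (k : nat) : R :=
  delta ^ k * u alpha c1 c2 i (outcome h s1 s2 k).

(* Continuation payoffs are the sums of the series
   (which converge since payoffs are bounded on [0,alpha]^2). *)
Definition SPE (alpha c1 c2 delta : R) (s1 s2 : strategy) : Prop :=
  feasible_strategy alpha s1 /\ feasible_strategy alpha s2 /\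
  forall h : history, feasible_history alpha h ->
    (forall s' : strategy, feasible_strategy alpha s' ->
       forall v v' : R,
         infinite_sum (cont_term alpha c1 c2 delta P1 h s1 s2) v ->
         infinite_sum (cont_term alpha c1 c2 delta P1 h s' s2) v' ->
         v' <= v) /\
    (forall s' : strategy, feasible_strategy alpha s' ->
       forall v v' : R,
         infinite_sum (cont_term alpha c1 c2 delta P2 h s1 s2) v ->
         infinite_sum (cont_term alpha c1 c2 delta P2 h s1 s') v' ->
         v' <= v).

(* Nash equilibrium effort of the stage game. *)
Definition xstar (alpha c1 c2 : R) : R := alpha / (4 * c2 - alpha * c1).

Fixpoint all_coop (xbar : R) (h : history) : bool :=
  match h with
  | [] => true
  | (a1, a2) :: t =>
      if Req_EM_T a1 xbar then
        if Req_EM_T a2 xbar then all_coop xbar t else false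
      else false
  end.

Definition trigger (alpha c1 c2 xbar : R) : strategy :=
  fun h => if all_coop xbar h then xbar else xstar alpha c1 c2.

(* Write x_s for the Nash effort x* = alpha/d, E = d^2 - delta alpha^2 c1^2
   and delta# for the threshold d^2/(8 c2 l + d^2).  The proof has four parts.

   For a bounded value function V on
      histories, the partial sums of a discounted continuation payoff
      telescope against V up to the discounted Bellman slacks
      V H - (u + delta V(next H)).  If no one-period deviation is profitable
      (slack >= 0) the continuation payoff is at most V h; on the path of
      play (slack = 0) it is at least V h.  Together this yields an SPE.
   2. Stage game.  Against effort w a player earns at most the best-reply
      value M(w), and M(x_s) = u(x_s, x_s) because x_s is the Nash effort.
   3. Trigger strategies.  With V = u(xbar,xbar)/(1-delta) on cooperative
      histories and u(x_s,x_s)/(1-delta) otherwise, the one-shot conditions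
      reduce to (1-delta) M(xbar) + delta u(x_s,x_s) <= u(xbar,xbar).
   4. Algebra.  For xbar > x_s this is (xbar - x_s) E <= 32 delta c2^2 x_s,
      which holds for xbar = xhat when delta >= delta#, and with equality for
      the explicit xbar of the statement when delta < delta#. *)

From Stdlib Require Import Reals.
From Stdlib Require Import Lra Psatz List Bool.
Import ListNotations.
Open Scope R_scope.

(** * Discounted continuation payoffs and the one-shot deviation principle *)

Lemma geometric_tail_cv (delta A K : R) :
  0 <= delta < 1 -> Un_cv (fun N => A + delta ^ S N * K) A.
Proof.
  intros Hdelta.
  assert (Hpow : Un_cv (fun N => delta ^ S N) 0).
  { intros eps Heps.
    assert (Habs : Rabs delta < 1) by (rewrite Rabs_right; lra).
    destruct (pow_lt_1_zero delta Habs eps Heps) as [N HN].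
    exists N; intros n Hn; unfold R_dist; rewrite Rminus_0_r.
    apply HN; lia. }
  assert (Hconst : forall c : R, Un_cv (fun _ => c) c).
  { intros c eps Heps; exists O; intros; unfold R_dist.
    rewrite Rminus_diag, Rabs_R0; exact Heps. }
  pose proof (CV_plus _ _ _ _ (Hconst A) (CV_mult _ _ _ _ Hpow (Hconst K))) as Hcv.
  rewrite Rmult_0_l, Rplus_0_r in Hcv. exact Hcv.
Qed.

Definition bellman_slack (alpha c1 c2 delta : R) (i : player)
  (V : history -> R) (s1 s2 : strategy) (H : history) : R :=
  V H - (u alpha c1 c2 i (s1 H, s2 H) + delta * V (H ++ [(s1 H, s2 H)])).

Section OneShotDeviation.

Variables (alpha c1 c2 delta : R) (i : player) (V : history -> R).
Variables (s1 s2 : strategy) (h : history).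

Lemma continuation_telescope (N : nat) :
  sum_f_R0 (cont_term alpha c1 c2 delta i h s1 s2) N
  + sum_f_R0 (fun k => delta ^ k *
        bellman_slack alpha c1 c2 delta i V s1 s2 (hist_after h s1 s2 k)) N
  = V h - delta ^ S N * V (hist_after h s1 s2 (S N)).
Proof.
  induction N as [|N IH].
  - unfold cont_term, outcome, bellman_slack; cbn [sum_f_R0 hist_after pow]. ring.
  - cbn [sum_f_R0].
    set (H := hist_after h s1 s2 (S N)).
    assert (Hstep : cont_term alpha c1 c2 delta i h s1 s2 (S N)
        + delta ^ S N * bellman_slack alpha c1 c2 delta i V s1 s2 H
        = delta ^ S N * V H - delta ^ S (S N) * V (hist_after h s1 s2 (S (S N)))).
    { change (hist_after h s1 s2 (S (S N))) with (H ++ [(s1 H, s2 H)]).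
      unfold cont_term, outcome, bellman_slack; fold H; cbn [pow]. ring. }
    fold H in IH. lra.
Qed.

Variable K : R.
Hypothesis hdelta : 0 <= delta < 1.
Hypothesis hV : forall H, - K <= V H <= K.

Lemma continuation_le_value (v : R) :
  (forall H, 0 <= bellman_slack alpha c1 c2 delta i V s1 s2 H) ->
  infinite_sum (cont_term alpha c1 c2 delta i h s1 s2) v -> v <= V h.
Proof.
  intros Hslack Hv.
  apply (@Rle_cv_lim (sum_f_R0 (cont_term alpha c1 c2 delta i h s1 s2))
           (fun N => V h + delta ^ S N * K));
    [intros N | exact Hv | exact (geometric_tail_cv delta (V h) K hdelta)].
  pose proof (continuation_telescope N) as Htele.
  assert (Hsum : 0 <= sum_f_R0 (fun k => delta ^ k *
      bellman_slack alpha c1 c2 delta i V s1 s2 (hist_after h s1 s2 k)) N).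
  { apply cond_pos_sum; intros k.
    apply Rmult_le_pos; [apply pow_le; lra | apply Hslack]. }
  pose proof (hV (hist_after h s1 s2 (S N))).
  assert (0 <= delta ^ S N) by (apply pow_le; lra).
  nra.
Qed.

Lemma value_le_continuation (v : R) :
  (forall H, bellman_slack alpha c1 c2 delta i V s1 s2 H = 0) ->
  infinite_sum (cont_term alpha c1 c2 delta i h s1 s2) v -> V h <= v.
Proof.
  intros Hslack Hv.
  apply (@Rle_cv_lim (fun N => V h + delta ^ S N * (- K))
           (sum_f_R0 (cont_term alpha c1 c2 delta i h s1 s2)));
    [intros N | exact (geometric_tail_cv delta (V h) (- K) hdelta) | exact Hv].
  pose proof (continuation_telescope N) as Htele.
  rewrite (sum_eq_R0 (fun k => delta ^ k *
      bellman_slack alpha c1 c2 delta i V s1 s2 (hist_after h s1 s2 k))) in Htele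
    by (intros k _; rewrite Hslack; ring).
  pose proof (hV (hist_after h s1 s2 (S N))).
  assert (0 <= delta ^ S N) by (apply pow_le; lra).
  nra.
Qed.

End OneShotDeviation.

Lemma spe_of_one_shot (alpha c1 c2 delta K : R) (s1 s2 : strategy)
  (V1 V2 : history -> R) :
  0 <= delta < 1 ->
  feasible_strategy alpha s1 -> feasible_strategy alpha s2 ->
  (forall H, - K <= V1 H <= K) -> (forall H, - K <= V2 H <= K) ->
  (forall s' H, 0 <= bellman_slack alpha c1 c2 delta P1 V1 s' s2 H) ->
  (forall s' H, 0 <= bellman_slack alpha c1 c2 delta P2 V2 s1 s' H) ->
  (forall H, bellman_slack alpha c1 c2 delta P1 V1 s1 s2 H = 0) ->
  (forall H, bellman_slack alpha c1 c2 delta P2 V2 s1 s2 H = 0) ->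
  SPE alpha c1 c2 delta s1 s2.
Proof.
  intros Hdelta Hs1 Hs2 HV1 HV2 Hdev1 Hdev2 Hpath1 Hpath2.
  split; [exact Hs1|split; [exact Hs2|]].
  intros h _; split; intros s' _ v v' Hv Hv'.
  - apply Rle_trans with (V1 h).
    + exact (continuation_le_value alpha c1 c2 delta P1 V1 s' s2 h K
               Hdelta HV1 v' (Hdev1 s') Hv').
    + exact (value_le_continuation alpha c1 c2 delta P1 V1 s1 s2 h K
               Hdelta HV1 v Hpath1 Hv).
  - apply Rle_trans with (V2 h).
    + exact (continuation_le_value alpha c1 c2 delta P2 V2 s1 s' h K
               Hdelta HV2 v' (Hdev2 s') Hv').
    + exact (value_le_continuation alpha c1 c2 delta P2 V2 s1 s2 h K
               Hdelta HV2 v Hpath2 Hv).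
Qed.

(** * The stage game *)

(* Player 1's best-reply payoff against effort w (attained at
   z = alpha (1 + c1 w) / (4 c2)). *)
Definition best_reply_payoff (alpha c1 c2 w : R) : R :=
  (alpha * (1 + c1 * w)) ^ 2 / (16 * c2) + alpha * w / 2.

Lemma payoff_le_best_reply (alpha c1 c2 z w : R) :
  0 < c2 -> u alpha c1 c2 P1 (z, w) <= best_reply_payoff alpha c1 c2 w.
Proof.
  intros Hc2. unfold u, best_reply_payoff; cbv beta iota.
  assert (Hsq : 0 <= c2 * (z - alpha * (1 + c1 * w) / (4 * c2)) ^ 2)
    by (apply Rmult_le_pos; [lra | apply pow2_ge_0]).
  enough (Hgap : (alpha * (1 + c1 * w)) ^ 2 / (16 * c2) + alpha * w / 2
    - (alpha * ((z + w) / 2 + c1 * (z * w) / 2) - c2 * z ^ 2)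
    = c2 * (z - alpha * (1 + c1 * w) / (4 * c2)) ^ 2) by lra.
  field; lra.
Qed.

Lemma best_reply_at_nash (alpha c1 c2 : R) :
  0 < c2 -> 4 * c2 - alpha * c1 <> 0 ->
  best_reply_payoff alpha c1 c2 (xstar alpha c1 c2)
  = u alpha c1 c2 P1 (xstar alpha c1 c2, xstar alpha c1 c2).
Proof. intros. unfold u, best_reply_payoff, xstar; cbv beta iota. field; lra. Qed.

Lemma payoff_swap (alpha c1 c2 z w : R) :
  u alpha c1 c2 P2 (w, z) = u alpha c1 c2 P1 (z, w).
Proof. unfold u; cbv beta iota. field. Qed.

(** * Trigger strategies *)

Lemma all_coop_snoc (y : R) (H : history) (a : profile) :
  all_coop y (H ++ [a]) = all_coop y H && all_coop y [a].
Proof.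
  destruct a as [a1 a2].
  induction H as [|[b1 b2] H IH]; simpl.
  - destruct (Req_EM_T a1 y), (Req_EM_T a2 y); reflexivity.
  - destruct (Req_EM_T b1 y), (Req_EM_T b2 y); auto.
Qed.

Lemma all_coop_swap (y a1 a2 : R) :
  all_coop y [(a1, a2)] = all_coop y [(a2, a1)].
Proof. simpl. destruct (Req_EM_T a1 y), (Req_EM_T a2 y); reflexivity. Qed.

Definition trigger_value (alpha c1 c2 delta y : R) (H : history) : R :=
  (if all_coop y H then u alpha c1 c2 P1 (y, y)
   else u alpha c1 c2 P1 (xstar alpha c1 c2, xstar alpha c1 c2)) / (1 - delta).

Lemma trigger_value_swap (alpha c1 c2 delta y a1 a2 : R) (H : history) :
  trigger_value alpha c1 c2 delta y (H ++ [(a1, a2)])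
  = trigger_value alpha c1 c2 delta y (H ++ [(a2, a1)]).
Proof. unfold trigger_value. rewrite !all_coop_snoc, all_coop_swap. reflexivity. Qed.

Lemma trigger_value_bounded (alpha c1 c2 delta y : R) (H : history) :
  0 <= delta < 1 ->
  let K := (Rabs (u alpha c1 c2 P1 (y, y))
            + Rabs (u alpha c1 c2 P1 (xstar alpha c1 c2, xstar alpha c1 c2)))
           / (1 - delta) in
  - K <= trigger_value alpha c1 c2 delta y H <= K.
Proof.
  intros Hdelta K. unfold K, trigger_value, Rdiv.
  assert (Hinv : 0 < / (1 - delta)) by (apply Rinv_0_lt_compat; lra).
  set (a := u alpha c1 c2 P1 (y, y)).
  set (b := u alpha c1 c2 P1 (xstar alpha c1 c2, xstar alpha c1 c2)).
  assert (Habs : forall r, - (Rabs a + Rabs b) <= r <= Rabs a + Rabs b ->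
            - ((Rabs a + Rabs b) * / (1 - delta)) <= r * / (1 - delta)
              <= (Rabs a + Rabs b) * / (1 - delta)) by (intros; split; nra).
  apply Habs.
  pose proof (Rabs_pos a); pose proof (Rabs_pos b).
  pose proof (Rle_abs a); pose proof (Rle_abs (- a)); rewrite Rabs_Ropp in *.
  pose proof (Rle_abs b); pose proof (Rle_abs (- b)); rewrite Rabs_Ropp in *.
  destruct (all_coop y H); lra.
Qed.

(* The repeated-game incentive constraint for cooperative level y: deviating
   once (best reply now, Nash payoffs forever after) does not pay. *)
Definition coop_incentive (alpha c1 c2 delta y : R) : Prop :=
  (1 - delta) * best_reply_payoff alpha c1 c2 y
  + delta * u alpha c1 c2 P1 (xstar alpha c1 c2, xstar alpha c1 c2)
  <= u alpha c1 c2 P1 (y, y).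

Lemma discounted_stream_le (delta a b c : R) :
  0 < delta < 1 -> (1 - delta) * a + delta * b <= c ->
  a + delta * (b / (1 - delta)) <= c / (1 - delta).
Proof.
  intros Hdelta Hle.
  replace (a + delta * (b / (1 - delta))) with (((1 - delta) * a + delta * b) / (1 - delta))
    by (field; lra).
  apply Rmult_le_compat_r; [apply Rlt_le, Rinv_0_lt_compat; lra | exact Hle].
Qed.

Section TriggerOneShot.

Variables (alpha c1 c2 delta y : R).
Hypothesis hdelta : 0 < delta < 1.
Hypothesis hc2 : 0 < c2.
Hypothesis hd : 4 * c2 - alpha * c1 <> 0.
Hypothesis hinc : coop_incentive alpha c1 c2 delta y.

Local Notation V := (trigger_value alpha c1 c2 delta y).
Local Notation sigma := (trigger alpha c1 c2 y).

Lemma trigger_one_shot (H : history) (z : R) :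
  u alpha c1 c2 P1 (z, sigma H) + delta * V (H ++ [(z, sigma H)]) <= V H /\
  (z = sigma H ->
   u alpha c1 c2 P1 (z, sigma H) + delta * V (H ++ [(z, sigma H)]) = V H).
Proof.
  pose proof (best_reply_at_nash alpha c1 c2 hc2 hd) as Hnash.
  unfold trigger_value, trigger, coop_incentive in *. rewrite all_coop_snoc.
  set (xs := xstar alpha c1 c2) in *.
  destruct (all_coop y H); simpl andb.
  - simpl all_coop. destruct (Req_EM_T z y) as [->|Hzy].
    + destruct (Req_EM_T y y) as [_|]; [|congruence].
      split; [apply Req_le|intros _]; field; lra.
    + split; [|intros; congruence].
      apply discounted_stream_le; [exact hdelta|].
      pose proof (payoff_le_best_reply alpha c1 c2 z y hc2). nra.
  - split; [|intros ->; field; lra].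
    apply discounted_stream_le; [exact hdelta|].
    pose proof (payoff_le_best_reply alpha c1 c2 z xs hc2). nra.
Qed.

Lemma trigger_spe :
  0 <= y <= alpha -> 0 <= xstar alpha c1 c2 <= alpha ->
  SPE alpha c1 c2 delta sigma sigma.
Proof.
  intros Hy Hxs.
  assert (Hfeas : feasible_strategy alpha sigma).
  { intros H. unfold trigger, feasible_action. destruct (all_coop y H); lra. }
  assert (Hdev1 : forall s' H, 0 <= bellman_slack alpha c1 c2 delta P1 V s' sigma H).
  { intros s' H. unfold bellman_slack.
    pose proof (proj1 (trigger_one_shot H (s' H))). lra. }
  assert (Hdev2 : forall s' H, 0 <= bellman_slack alpha c1 c2 delta P2 V sigma s' H).
  { intros s' H. unfold bellman_slack.
    rewrite payoff_swap, trigger_value_swap.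
    pose proof (proj1 (trigger_one_shot H (s' H))). lra. }
  assert (Hpath1 : forall H, bellman_slack alpha c1 c2 delta P1 V sigma sigma H = 0).
  { intros H. unfold bellman_slack.
    pose proof (proj2 (trigger_one_shot H (sigma H)) eq_refl). lra. }
  assert (Hpath2 : forall H, bellman_slack alpha c1 c2 delta P2 V sigma sigma H = 0).
  { intros H. unfold bellman_slack.
    rewrite payoff_swap.
    pose proof (proj2 (trigger_one_shot H (sigma H)) eq_refl). lra. }
  assert (Hdelta : 0 <= delta < 1) by lra.
  pose proof (fun H => trigger_value_bounded alpha c1 c2 delta y H Hdelta) as HV.
  cbv zeta in HV.
  exact (spe_of_one_shot alpha c1 c2 delta _ sigma sigma V V Hdelta Hfeas Hfeas
           HV HV Hdev1 Hdev2 Hpath1 Hpath2).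
Qed.

End TriggerOneShot.

(** * The partnership game's parameter region *)

Lemma incentive_slack_identity (alpha c1 c2 delta y : R) :
  0 < c2 -> 4 * c2 - alpha * c1 <> 0 ->
  u alpha c1 c2 P1 (y, y)
  - delta * u alpha c1 c2 P1 (xstar alpha c1 c2, xstar alpha c1 c2)
  - (1 - delta) * best_reply_payoff alpha c1 c2 y
  = (y - xstar alpha c1 c2) / (16 * c2) *
    (32 * delta * c2 ^ 2 * xstar alpha c1 c2
     - (y - xstar alpha c1 c2)
       * ((4 * c2 - alpha * c1) ^ 2 - delta * alpha ^ 2 * c1 ^ 2)).
Proof. intros. unfold u, best_reply_payoff, xstar; cbv beta iota. field; lra. Qed.

Section PartnershipRegion.

Variables (alpha c1 c2 delta : R).
Hypothesis halpha : 0 < alpha.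
Hypothesis hc1 : 0 <= c1 <= 2 / alpha.
Hypothesis hc2 : 3 / 2 <= c2 <= 2.
Hypothesis hdelta : 0 < delta < 1.

Local Notation d := (4 * c2 - alpha * c1).
Local Notation l := (2 * c2 - alpha * c1).
Local Notation xs := (alpha / d).
Local Notation xhat := (alpha / l).
Local Notation E := (d ^ 2 - delta * alpha ^ 2 * c1 ^ 2).
Local Notation dsharp := (d ^ 2 / (8 * c2 * l + d ^ 2)).

Lemma alpha_c1_bounds : 0 <= alpha * c1 <= 2.
Proof.
  split; [apply Rmult_le_pos; lra|].
  replace 2 with (alpha * (2 / alpha)) by (field; lra).
  apply Rmult_le_compat_l; lra.
Qed.

Lemma parameter_facts :
  4 <= d /\ 1 <= l /\ 0 < xs <= alpha /\ xhat <= alpha /\ 0 < E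
  /\ d ^ 2 = 8 * c2 * l + (alpha * c1) ^ 2.
Proof.
  pose proof alpha_c1_bounds.
  assert (Hle : forall q, 1 <= q -> alpha / q <= alpha).
  { intros q Hq. unfold Rdiv.
    rewrite <- (Rmult_1_r alpha) at 2. apply Rmult_le_compat_l; [lra|].
    rewrite <- Rinv_1. apply Rinv_le_contravar; lra. }
  repeat split; try lra; try (apply Hle; lra); try ring.
  - apply Rdiv_lt_0_compat; lra.
  - replace (delta * alpha ^ 2 * c1 ^ 2) with (delta * (alpha * c1) ^ 2) by ring.
    nra.
Qed.

Lemma spe_of_incentive_bound (y : R) :
  xs < y <= alpha -> (y - xs) * E <= 32 * delta * c2 ^ 2 * xs ->
  SPE alpha c1 c2 delta (trigger alpha c1 c2 y) (trigger alpha c1 c2 y).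
Proof.
  intros Hy Hbound.
  destruct parameter_facts as (Hd & _ & Hxs & _).
  apply trigger_spe; unfold xstar; try lra.
  unfold coop_incentive, xstar.
  pose proof (incentive_slack_identity alpha c1 c2 delta y ltac:(lra) ltac:(lra)) as Hid.
  unfold xstar in Hid.
  assert (0 <= (y - xs) / (16 * c2) * (32 * delta * c2 ^ 2 * xs - (y - xs) * E))
    by (apply Rmult_le_pos; [apply Rlt_le, Rdiv_lt_0_compat|]; lra).
  lra.
Qed.

Lemma xhat_sustainable :
  dsharp <= delta -> xs < xhat <= alpha /\ (xhat - xs) * E <= 32 * delta * c2 ^ 2 * xs.
Proof.
  intros Hge.
  destruct parameter_facts as (Hd & Hl & Hxs & Hxhat & HE & Hsq).
  assert (Hgap : xhat - xs = 2 * c2 * xs / l) by (field; lra).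
  assert (Hgap_pos : 0 < 2 * c2 * xs / l) by (apply Rdiv_lt_0_compat; nra).
  assert (Hpatient : d ^ 2 <= delta * (8 * c2 * l + d ^ 2)).
  { assert (Hpos : 0 < 8 * c2 * l + d ^ 2) by nra.
    replace (d ^ 2) with (dsharp * (8 * c2 * l + d ^ 2)) at 1 by (field; lra).
    apply Rmult_le_compat_r; lra. }
  assert (HEle : E <= 16 * delta * c2 * l).
  { replace (delta * alpha ^ 2 * c1 ^ 2) with (delta * (alpha * c1) ^ 2) by ring. nra. }
  split; [lra|].
  rewrite Hgap.
  replace (32 * delta * c2 ^ 2 * xs) with (2 * c2 * xs / l * (16 * delta * c2 * l))
    by (field; lra).
  apply Rmult_le_compat_l; lra.
Qed.

Lemma xlow_sustainable :
  delta < dsharp ->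
  let xlow := alpha / d * ((E + 32 * delta * c2 ^ 2) / E) in
  xs < xlow <= xhat /\ (xlow - xs) * E = 32 * delta * c2 ^ 2 * xs.
Proof.
  intros Hlt xlow.
  destruct parameter_facts as (Hd & Hl & Hxs & Hxhat & HE & Hsq).
  assert (Hgap : xlow - xs = 32 * delta * c2 ^ 2 * xs / E) by (unfold xlow; field; lra).
  assert (Hgap_pos : 0 < 32 * delta * c2 ^ 2 * xs / E)
    by (apply Rdiv_lt_0_compat; [repeat apply Rmult_lt_0_compat|]; nra).
  assert (Himpatient : delta * (8 * c2 * l + d ^ 2) < d ^ 2).
  { assert (Hpos : 0 < 8 * c2 * l + d ^ 2) by nra.
    replace (d ^ 2) with (dsharp * (8 * c2 * l + d ^ 2)) at 2 by (field; lra).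
    apply Rmult_lt_compat_r; lra. }
  assert (HEgt : 16 * delta * c2 * l < E).
  { replace (delta * alpha ^ 2 * c1 ^ 2) with (delta * (alpha * c1) ^ 2) by ring. nra. }
  assert (Hbelow : xhat - xlow = 2 * c2 * xs / (l * E) * (E - 16 * delta * c2 * l))
    by (unfold xlow; field; lra).
  assert (0 <= 2 * c2 * xs / (l * E) * (E - 16 * delta * c2 * l)).
  { apply Rmult_le_pos; [apply Rlt_le, Rdiv_lt_0_compat|]; nra. }
  split; [lra|].
  rewrite Hgap. field. lra.
Qed.

End PartnershipRegion.

Theorem corollary2 (alpha c1 c2 : R)
  (halpha : 0 < alpha) (hc1 : 0 <= c1 <= 2 / alpha) (hc2 : 3 / 2 <= c2 <= 2)
  (delta : R) (hdelta : 0 < delta < 1) :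
  let d := 4 * c2 - alpha * c1 in
  let l := 2 * c2 - alpha * c1 in
  let xs := alpha / d in
  let xhat := alpha / l in
  let dsharp := d ^ 2 / (8 * c2 * l + d ^ 2) in
  exists xbar : R,
    xs < xbar <= xhat /\
    SPE alpha c1 c2 delta (trigger alpha c1 c2 xbar) (trigger alpha c1 c2 xbar) /\
    (dsharp <= delta -> xbar = xhat) /\
    (delta < dsharp ->
       xbar = alpha / d *
              ((d ^ 2 - delta * alpha ^ 2 * c1 ^ 2 + 32 * delta * c2 ^ 2)
               / (d ^ 2 - delta * alpha ^ 2 * c1 ^ 2))).
Proof.
  cbv zeta.
  pose proof (parameter_facts alpha c1 c2 delta halpha hc1 hc2 hdelta)
    as (_ & _ & _ & Hxhat & _).
  destruct (Rle_lt_dec ((4 * c2 - alpha * c1) ^ 2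
              / (8 * c2 * (2 * c2 - alpha * c1) + (4 * c2 - alpha * c1) ^ 2)) delta)
    as [Hpatient | Himpatient].
  - exists (alpha / (2 * c2 - alpha * c1)).
    destruct (xhat_sustainable alpha c1 c2 delta halpha hc1 hc2 hdelta Hpatient)
      as [Hrange Hbound].
    split; [lra|]; split; [|split; intros; [reflexivity | lra]].
    apply spe_of_incentive_bound; auto; lra.
  - pose proof (xlow_sustainable alpha c1 c2 delta halpha hc1 hc2 hdelta Himpatient)
      as [Hrange Hbound].
    eexists; split; [exact Hrange|]; split; [|split; intros; [lra | reflexivity]].
    apply spe_of_incentive_bound; auto; lra.
Qed.
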